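(* Let $n\ge2$ and let $\{X_i\}_{i\in I}$ be an exhausting family of finite fully characteristic based covers of $R_n$, corresponding to subgroups $K_i=\pi_1(X_i)\le F_n$. Let $\phi\in\mathrm{End}(F_n)$ with $\phi\ne\mathrm{id}_{F_n}$. Then for some $i\in I$ the endomorphism of $H_1(X_i,\mathbb{Z})$ induced by $\phi$ is not the identity.
   Context: $F_n$ is the free group of rank $n\ge2$, identified with $\pi_1(R_n,* )$ where $R_n$ is the wedge of $n$ circles. A subgroup $K\le F_n$ is fully characteristic if $\phi(K)\subseteq K$ for all $\phi\in\mathrm{End}(F_n)$. A finite fully characteristic based cover is the connected covering $(X,x_1)\to(R_n,* )$ corresponding to a finite-index fully characteristic subgroup $K$. The family is exhausting if every $1\ne w\in F_n$ has nontrivial image in some quotient $F_n/K_i$ (i.e. $\bigcap_i K_i=\{1\}$). The endomorphism of $H_1(X_i,\mathbb{Z})\cong K_i^{ab}$ induced by $\phi$ is the abelianization of $\phi|_{K_i}$. *)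

(* The free group F_n is modelled as reduced words over the
   alphabet 'I_n * bool (generator i, with bool = true meaning the inverse). *)
From mathcomp Require Import ssreflect ssrfun ssrbool eqtype ssrnat seq fintype.
Set Implicit Arguments. Unset Strict Implicit. Unset Printing Implicit Defensive.

Section FreeGroup.
Variable n : nat.

Definition letter := ('I_n * bool)%type.
Definition linv (x : letter) : letter := (x.1, ~~ x.2).

Fixpoint reduce (w : seq letter) : seq letter :=
  match w with
  | [::] => [::]
  | x :: w' =>
      match reduce w' with
      | [::] => [:: x]
      | y :: w'' => if y == linv x then w'' else x :: y :: w''
      end
  end.

Fixpoint reducedb (w : seq letter) : bool :=
  match w with
  | x :: ((y :: _) as w') => (y != linv x) && reducedb w'
  | _ => true
  end.

Lemma reducedb_tail x w : reducedb (x :: w) -> reducedb w.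
Proof. by case: w => //= y w /andP[]. Qed.

Lemma reduce_reduced w : reducedb (reduce w).
Proof.
elim: w => //= x w IH.
case E: (reduce w) IH => [|y w''] //= H.
case: ifP => [_|/negbT Hne]; first exact: reducedb_tail H.
by rewrite /= H Hne.
Qed.


Definition FG := {w : seq letter | reducedb w}.

Definition fg1 : FG := exist _ [::] isT.
Definition fgmul (u v : FG) : FG :=
  exist _ (reduce (sval u ++ sval v)) (reduce_reduced _).
Definition fginv (u : FG) : FG :=
  exist _ (reduce (rev (map linv (sval u)))) (reduce_reduced _).

Definition is_endo (phi : FG -> FG) : Prop :=
  forall a b, phi (fgmul a b) = fgmul (phi a) (phi b).

Definition is_subgroup (K : FG -> Prop) : Prop :=
  [/\ K fg1, (forall a b, K a -> K b -> K (fgmul a b))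
    & (forall a, K a -> K (fginv a))].

Definition finite_index (K : FG -> Prop) : Prop :=
  exists (m : nat) (r : 'I_m -> FG),
    forall g, exists j k, K k /\ g = fgmul (r j) k.

Definition fully_characteristic (K : FG -> Prop) : Prop :=
  forall phi, is_endo phi -> forall k, K k -> K (phi k).

Inductive gen (S : FG -> Prop) : FG -> Prop :=
  | gen_one : gen S fg1
  | gen_base a : S a -> gen S a
  | gen_mul a b : gen S a -> gen S b -> gen S (fgmul a b)
  | gen_inv a : gen S a -> gen S (fginv a).

Definition fgcomm (a b : FG) : FG :=
  fgmul (fgmul (fginv a) (fginv b)) (fgmul a b).

Definition derived (K : FG -> Prop) : FG -> Prop :=
  gen (fun c => exists a b, [/\ K a, K b & c = fgcomm a b]).

(* The endomorphism of H_1(X_K) = K^ab = K/[K,K] induced by phi (abelianization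
   of phi restricted to K) is the identity: phi(k) [K,K] = k [K,K] for k in K. *)
Definition induced_H1_is_id (phi : FG -> FG) (K : FG -> Prop) : Prop :=
  forall k, K k -> derived K (fgmul (phi k) (fginv k)).

End FreeGroup.

(* Fix one of the subgroups K (normal, being fully characteristic) and put
   h := g^-1 phi(g). For a letter z and a set T of vertices of the cover
   X = K\F_n, the signed number of z-edges leaving T is a 1-cocycle on X; on
   loops it is a homomorphism K -> Z vanishing on [K, K]. If phi induces the
   identity on H_1(X) = K/[K, K], a conjugation argument shows that the cocycles
   of T and of its translate h^-1 T agree on every loop. Take T = K and let m be
   the order of the letter x modulo K: the loop x^m leaves K exactly once, so
   h x^j lies in K for some j < m, and likewise h y^t for a second letter y. If
   h is not in K then 0 < j, and on the loop x^j y^-t the count for K is 1 while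
   the count for h^-1 K is 0. Hence h lies in every K, and exhaustion forces
   h = 1. *)

From HB Require Import structures.
From mathcomp Require Import ssreflect ssrfun ssrbool eqtype ssrnat seq fintype.
From mathcomp Require Import choice bigop monoid ssralg ssrint boolp.
Set Implicit Arguments. Unset Strict Implicit. Unset Printing Implicit Defensive.

Import GRing.Theory.
Local Open Scope group_scope.

Section FreeGroup.
Variable n : nat.
Implicit Types (x : letter n) (u v w : seq (letter n)) (a b g : FG n).

Lemma linvK x : linv (linv x) = x.
Proof. by case: x => i b; rewrite /linv /= negbK. Qed.

Lemma linv_neq x : (linv x == x) = false.
Proof. by case: x => i [] /=; rewrite /linv xpair_eqE /= andbF. Qed.

Lemma reduce_id w : reducedb w -> reduce w = w.
Proof.
elim: w => //= x w IH /[dup] /reducedb_tail /IH ->.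
by case: w {IH} => //= y w /andP[/negbTE ->].
Qed.

Lemma reduce_idem w : reduce (reduce w) = reduce w.
Proof. exact/reduce_id/reduce_reduced. Qed.

Lemma reduce_catr u v : reduce (u ++ v) = reduce (u ++ reduce v).
Proof. by elim: u => [|x u /= ->]; rewrite ?reduce_idem. Qed.

Lemma reduce_pair x w : reduce [:: x, linv x & w] = reduce w.
Proof.
rewrite /=; case Ew: (reduce w) (reduce_reduced w) => [|y w'] /=; first by rewrite eqxx.
case: eqP => [-> | _] /=; last by rewrite eqxx.
by rewrite !linvK; case: w' {Ew} => //= y' w' /andP[/negbTE ->].
Qed.

Lemma reduce_catl u v : reduce (reduce u ++ v) = reduce (u ++ v).
Proof.
elim: u => // x u IH.
have -> : reduce ((x :: u) ++ v) = reduce (x :: reduce u ++ v) by rewrite /= IH.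
rewrite [reduce (x :: u)]/=; case: (reduce u) => // y t.
by case: eqP => [-> | _] //; rewrite cat_cons reduce_pair.
Qed.

Lemma reduce_invl u : reduce (rev (map (@linv n) u) ++ u) = [::].
Proof.
elim: u => //= x u IH; rewrite rev_cons -cats1 -catA /=.
by rewrite reduce_catr -{2}(linvK x) reduce_pair -reduce_catr.
Qed.

Lemma reduce_invr u : reduce (u ++ rev (map (@linv n) u)) = [::].
Proof.
have := reduce_invl (rev (map (@linv n) u)).
by rewrite map_rev revK -map_comp (eq_map linvK) map_id.
Qed.

Definition red w : FG n := exist _ (reduce w) (reduce_reduced w).

HB.instance Definition _ := Choice.copy (FG n) {w : seq (letter n) | reducedb w}.

Lemma red_val a : red (sval a) = a.
Proof. by apply: val_inj; rewrite /= reduce_id ?(svalP a). Qed.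

Lemma fgmul_red u v : fgmul (red u) (red v) = red (u ++ v).
Proof. by apply: val_inj; rewrite /= reduce_catl -reduce_catr. Qed.

Lemma fgmulA : associative (@fgmul n).
Proof.
by move=> a b c; rewrite -(red_val a) -(red_val b) -(red_val c) !fgmul_red catA.
Qed.

Lemma fg1mul : left_id (fg1 n) (@fgmul n).
Proof. exact: red_val. Qed.

Lemma fgmul1 : right_id (fg1 n) (@fgmul n).
Proof. by move=> a; rewrite -[RHS]red_val; apply: val_inj; rewrite /= cats0. Qed.

Lemma fginvmul : left_inverse (fg1 n) (@fginv n) (@fgmul n).
Proof.
by move=> a; rewrite -{2}(red_val a) fgmul_red; apply: val_inj; rewrite /= reduce_invl.
Qed.

Lemma fgmulinv : right_inverse (fg1 n) (@fginv n) (@fgmul n).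
Proof.
by move=> a; rewrite -{1}(red_val a) fgmul_red; apply: val_inj; rewrite /= reduce_invr.
Qed.

HB.instance Definition _ := isGroup.Build (FG n) fgmulA fg1mul fgmul1 fginvmul fgmulinv.

Lemma fgmulE a b : fgmul a b = a * b. Proof. by []. Qed.
Lemma fginvE a : fginv a = a^-1. Proof. by []. Qed.
Lemma fg1E : fg1 n = 1. Proof. by []. Qed.

Definition fglet x : FG n := red [:: x].

Lemma fgletV x : (fglet x)^-1 = fglet (linv x).
Proof. exact: val_inj. Qed.

Lemma red_nil : red [::] = 1 :> FG n.
Proof. exact: val_inj. Qed.

Lemma red_cons x w : red (x :: w) = fglet x * red w.
Proof. by rewrite -fgmulE fgmul_red. Qed.

End FreeGroup.

Definition indicator (A : Type) (P : A -> Prop) (a : A) : int :=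
  if `[< P a >] then 1%R else 0%R.

Lemma indicator1 (A : Type) (P : A -> Prop) a : P a -> indicator P a = 1%R.
Proof. by rewrite /indicator; case: asboolP. Qed.

Lemma indicator0 (A : Type) (P : A -> Prop) a : ~ P a -> indicator P a = 0%R.
Proof. by rewrite /indicator; case: asboolP. Qed.

Lemma sum_indicator_expg (G : groupType) (T : G -> Prop) (g x : G) j :
  0 < j -> T g -> (forall i, 0 < i < j -> ~ T (g * x ^+ i)) ->
  (\sum_(i < j) indicator T (g * x ^+ i)%g)%R = 1%R.
Proof.
case: j => // j _ Tg notT; rewrite big_ord_recl mulg1 indicator1 // big1 ?addr0 //.
by move=> i _; apply/indicator0/notT; rewrite lift0 /= ltnS ltn_ord.
Qed.

Lemma expg_subn (G : groupType) (x : G) i j :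
  i <= j -> x ^+ (j - i) = (x ^+ i)^-1 * x ^+ j.
Proof. by move=> ij; rewrite -{2}(subnKC ij) expgnDr mulKg. Qed.

Section Crossings.
Variables (n : nat) (z : letter n).
Local Open Scope ring_scope.
Local Open Scope group_scope.
Implicit Types (T : FG n -> Prop) (x : letter n) (u v w : seq (letter n)).
Implicit Types (a b g h : FG n).

Definition weight T g x : int :=
  if x == z then indicator T g
  else if x == linv z then - indicator T (g * fglet x) else 0.

Fixpoint walk T g w : int :=
  if w is x :: w' then weight T g x + walk T (g * fglet x) w' else 0.

(* The signed number of traversals of z-edges with origin in T along the path
   from g to g * a in the Cayley graph of F_n. *)
Definition crossing T g a : int := walk T g (sval a).

Lemma weight_pair T g x : weight T g x + weight T (g * fglet x) (linv x) = 0.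
Proof.
rewrite /weight -fgletV mulgK (inj_eq (can_inj (@linvK n))).
have linv_eqE y : (linv y == z) = (y == linv z).
  by apply/eqP/eqP => [<- | ->]; rewrite linvK.
rewrite linv_eqE.
case: (eqVneq x z) => [-> | _]; first by rewrite eq_sym linv_neq subrr.
by case: eqP; rewrite ?addNr ?addr0.
Qed.

Lemma walk_reduce T g w : walk T g (reduce w) = walk T g w.
Proof.
elim: w g => //= x w IH g; rewrite -IH.
case: (reduce w) => [|y w'] //=; case: eqP => [-> | _] //=.
by rewrite addrA weight_pair add0r -fgletV mulgK.
Qed.

Lemma walk_cat T g u v : walk T g (u ++ v) = walk T g u + walk T (g * red u) v.
Proof.
elim: u g => [|x u IH] g /=; first by rewrite red_nil mulg1 add0r.
by rewrite IH addrA red_cons mulgA.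
Qed.

Lemma crossingM T g a b : crossing T g (a * b) = crossing T g a + crossing T (g * a) b.
Proof. by rewrite /crossing -fgmulE /= walk_reduce walk_cat red_val. Qed.

Lemma crossingV T g a : crossing T g a^-1 = - crossing T (g * a^-1) a.
Proof. by apply/eqP; rewrite -addr_eq0 -crossingM mulVg. Qed.

Lemma crossing_fglet T g x : crossing T g (fglet x) = weight T g x.
Proof. by rewrite /crossing /= addr0. Qed.

Lemma crossingX T g m :
  crossing T g (fglet z ^+ m) = \sum_(i < m) indicator T (g * fglet z ^+ i)%g.
Proof.
elim: m => [|m IH]; first by rewrite big_ord0.
by rewrite expgSr crossingM IH crossing_fglet big_ord_recr /weight eqxx.
Qed.

Lemma crossingX_other T g x m :
  x != z -> x != linv z -> crossing T g (fglet x ^+ m) = 0.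
Proof.
move=> /negbTE xz /negbTE xz'; elim: m => // m IH.
by rewrite expgSr crossingM IH crossing_fglet /weight xz xz' addr0.
Qed.

Lemma crossing_translate T g h a :
  crossing T (g * h) a = crossing (fun q => T (g * q)) h a.
Proof.
rewrite /crossing; elim: (sval a) h => //= x w IH h.
by rewrite -mulgA IH /weight /indicator mulgA.
Qed.

End Crossings.

(* T is a union of cosets K q, i.e. a set of vertices of the cover K\F_n. *)
Definition left_invariant (n : nat) (K T : FG n -> Prop) :=
  forall k q, K k -> (T (k * q) <-> T q).

Definition conj_closed (n : nat) (K : FG n -> Prop) :=
  forall g k, K k -> K (g * k * g^-1).

Lemma subgroupP (n : nat) (K : FG n -> Prop) : is_subgroup K ->
  [/\ K 1, forall a b, K a -> K b -> K (a * b) & forall a, K a -> K a^-1].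
Proof. by []. Qed.

Section CrossingCocycle.
Variables (n : nat) (z : letter n) (K : FG n -> Prop).
Local Open Scope ring_scope.
Local Open Scope group_scope.
Hypothesis Ksub : is_subgroup K.
Implicit Types (T : FG n -> Prop) (a b c g h k : FG n).

Lemma subgroup_left_invariant : left_invariant K K.
Proof.
case/subgroupP: Ksub => _ KM KV k q Kk; split => [Kkq | Kq]; last exact: KM.
by rewrite -(mulKg k q); apply: KM => //; apply: KV.
Qed.

Lemma crossing_invariant T k g a :
  left_invariant K T -> K k -> crossing z T (k * g) a = crossing z T g a.
Proof.
move=> Tinv Kk; rewrite crossing_translate; congr crossing.
by apply/funext => q; apply/propext; apply: Tinv.
Qed.

Lemma crossing_homM T a b : left_invariant K T -> K a ->
  crossing z T 1 (a * b) = crossing z T 1 a + crossing z T 1 b.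
Proof.
move=> Tinv Ka; rewrite crossingM mul1g; congr (_ + _).
by rewrite -{1}[a]mulg1 crossing_invariant.
Qed.

Lemma crossing_homV T a : left_invariant K T -> K a ->
  crossing z T 1 a^-1 = - crossing z T 1 a.
Proof.
case/subgroupP: Ksub => _ _ KV Tinv Ka.
by rewrite crossingV mul1g -{1}[a^-1]mulg1 crossing_invariant //; apply: KV.
Qed.

Lemma crossing_derived T c :
  left_invariant K T -> derived K c -> K c /\ crossing z T 1 c = 0.
Proof.
case/subgroupP: Ksub => K1 KM KV Tinv.
elim=> [|_ [a [b [Ka Kb ->]]] | a b _ [Ka ca] _ [Kb cb] | a _ [Ka ca]].
- by [].
- rewrite /fgcomm !fgmulE !fginvE.
  have [Kia Kib] := (KV a Ka, KV b Kb).
  split; first by apply: (KM) => //; apply: (KM).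
  rewrite !crossing_homM //; last exact: KM.
  by rewrite !crossing_homV // addrACA !addNr addr0.
- by split; [apply: KM | rewrite fgmulE crossing_homM // ca cb addr0].
- by split; [apply: KV | rewrite fginvE crossing_homV // ca oppr0].
Qed.

Hypothesis Kconj : conj_closed K.

Lemma left_invariant_translate T h :
  left_invariant K T -> left_invariant K (fun q => T (h * q)).
Proof.
move=> Tinv k q Kk /=.
have -> : h * (k * q) = h * k * h^-1 * (h * q) by rewrite -!mulgA mulKg.
exact: Tinv (Kconj h Kk).
Qed.

Lemma crossing_conj T h k : left_invariant K T -> K k ->
  crossing z T 1 (h * k * h^-1) = crossing z (fun q => T (h * q)) 1 k.
Proof.
move=> Tinv Kk.
have hk : h * k = h * k * h^-1 * h by rewrite mulgVK.
have hh : crossing z T 1 h + crossing z T h h^-1 = 0.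
  by have := crossingM z T 1 h h^-1; rewrite mulgV mul1g => <-.
rewrite !crossingM !mul1g hk crossing_invariant //; last exact: Kconj.
by rewrite addrAC hh add0r -{1}[h]mulg1 crossing_translate.
Qed.

End CrossingCocycle.

Lemma fully_characteristic_conj_closed (n : nat) (K : FG n -> Prop) :
  fully_characteristic K -> conj_closed K.
Proof.
move=> Kfc g k; apply: (Kfc (fun a => g * a * g^-1)) => a b.
by rewrite !fgmulE !mulgA mulgVK.
Qed.

Section EndomorphismInvariance.
Variables (n : nat) (K : FG n -> Prop) (phi : FG n -> FG n).
Hypotheses (Ksub : is_subgroup K) (Kfc : fully_characteristic K).
Hypotheses (phi_endo : is_endo phi) (phi_H1 : induced_H1_is_id phi K).
Implicit Types (T : FG n -> Prop) (g k u : FG n).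

Let Kconj := fully_characteristic_conj_closed Kfc.

Lemma endoM : {morph phi : a b / a * b}.
Proof. exact: phi_endo. Qed.

Lemma endo1 : phi 1 = 1.
Proof. by apply: (mulgI (phi 1)); rewrite -endoM !mulg1. Qed.

Lemma endoV g : phi g^-1 = (phi g)^-1.
Proof. by apply/esym/mulg1_eq; rewrite -endoM mulgV endo1. Qed.

Lemma crossing_endo z T u :
  left_invariant K T -> K u -> crossing z T 1 (phi u) = crossing z T 1 u.
Proof.
move=> Tinv Ku; have [Kd dz] := crossing_derived z Ksub Tinv (phi_H1 Ku).
by rewrite -[phi u](mulgVK u) (crossing_homM _ _ Tinv Kd) dz add0r.
Qed.

Lemma crossing_translate_endo z T g k : left_invariant K T -> K k ->
  crossing z (fun q => T (phi g * q)) 1 k = crossing z (fun q => T (g * q)) 1 k.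
Proof.
move=> Tinv Kk; have Tphig := left_invariant_translate Kconj (phi g) Tinv.
rewrite -(crossing_endo z Tphig Kk).
rewrite -(crossing_conj z Kconj (phi g) Tinv (Kfc phi_endo Kk)).
rewrite -endoV -!endoM crossing_endo ?(crossing_conj z Kconj) //; exact: Kconj.
Qed.

Lemma crossing_displacement z g k : K k ->
  crossing z (fun q => K (g^-1 * phi g * q)) 1 k = crossing z K 1 k.
Proof.
move=> Kk; pose T q := K (g^-1 * q).
have Tinv : left_invariant K T.
  exact: (left_invariant_translate Kconj g^-1 (subgroup_left_invariant Ksub)).
have := crossing_translate_endo z g Tinv Kk; rewrite /T.
have -> : (fun q => K (g^-1 * (g * q))) = K by apply/funext => q; rewrite mulKg.
by under eq_fun do rewrite mulgA.
Qed.

End EndomorphismInvariance.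

Section FiniteIndex.
Variables (n : nat) (K : FG n -> Prop).
Hypotheses (Ksub : is_subgroup K) (Kfin : finite_index K).

Lemma finite_index_expg_mem g : exists2 m, 0 < m & K (g ^+ m).
Proof.
case/subgroupP: Ksub => _ KM KV; case: Kfin => M [r cover].
have [F HF] : exists F : 'I_M.+1 -> 'I_M,
    forall i : 'I_M.+1, exists k, K k /\ g ^+ i = r (F i) * k.
  exact: fin_all_exists (fun i => cover _).
have /injectivePn[i [j ij Fij]] : ~~ injectiveb F.
  by apply/injectiveP => /leq_card; rewrite !card_ord ltnn.
wlog lt_ij : i j ij Fij / i < j.
  move=> sym; have := ij; rewrite -(inj_eq val_inj) neq_ltn => /orP[] lt.
    exact: sym i j ij Fij lt.
  by apply: (sym j i _ (esym Fij) lt); rewrite eq_sym.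
have [[k1 [Kk1 Ei]] [k2 [Kk2 Ej]]] := (HF i, HF j).
exists (j - i); first by rewrite subn_gt0.
rewrite expg_subn; last exact: ltnW.
rewrite Ei Ej Fij invgM -mulgA mulKg.
exact: KM (KV _ Kk1) Kk2.
Qed.

Lemma minimal_expg_mem g :
  exists m, [/\ 0 < m, K (g ^+ m) & forall i, 0 < i < m -> ~ K (g ^+ i)].
Proof.
have exP : exists m, (0 < m) && `[< K (g ^+ m) >].
  by have [m m0 Km] := finite_index_expg_mem g; exists m; rewrite m0 asboolT.
case: (ex_minnP exP) => m /andP[m0 /asboolP Km] minm.
exists m; split => // i /andP[i0 im] Ki.
by have := minm i; rewrite i0 asboolT // leqNgt im => /(_ isT).
Qed.

End FiniteIndex.

Section Displacement.
Variables (n : nat) (K : FG n -> Prop) (h : FG n).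
Hypotheses (Ksub : is_subgroup K) (Kfin : finite_index K) (Kconj : conj_closed K).
Hypothesis h_shift :
  forall z k, K k -> crossing z (fun q => K (h * q)) 1 k = crossing z K 1 k.

Lemma shift_meets_powers z m :
  0 < m -> K (fglet z ^+ m) -> (forall i, 0 < i < m -> ~ K (fglet z ^+ i)) ->
  exists2 j, j < m & K (h * fglet z ^+ j).
Proof.
case/subgroupP: Ksub => K1 _ _ m0 Km minm.
have := h_shift z Km; rewrite !crossingX [RHS]sum_indicator_expg //; last first.
  by move=> i /minm; rewrite mul1g.
move=> sum1; apply: contrapT => none.
suff : (\sum_(i < m) indicator (fun q => K (h * q)%g) (1 * fglet z ^+ i)%g)%R = 0%R.
  by rewrite sum1.
apply: big1 => i _; apply: indicator0; rewrite /= mul1g => Khi.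
by apply: none; exists i.
Qed.

Lemma displacement_mem : 2 <= n -> K h.
Proof.
move=> n2; case/subgroupP: (Ksub) => K1 KM KV; apply: contrapT => nKh.
pose x : letter n := (Ordinal (ltnW n2), false).
pose y : letter n := (Ordinal n2, false).
have [m [m0 Km minm]] := minimal_expg_mem Ksub Kfin (fglet x).
have [j jm Khj] := shift_meets_powers m0 Km minm.
have [m' [m'0 Km' minm']] := minimal_expg_mem Ksub Kfin (fglet y).
have [t _ Kht] := shift_meets_powers m'0 Km' minm'.
have j0 : 0 < j by case: j jm Khj => // _; rewrite mulg1.
set k := fglet x ^+ j * (fglet y ^+ t)^-1.
have Kk : K k.
  have := Kconj h^-1 (KM _ _ Khj (KV _ Kht)).
  by rewrite invgK invgM -!mulgA mulKg mulVg mulg1.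
have count T : crossing x T 1 k = (\sum_(i < j) indicator T (1 * fglet x ^+ i)%g)%R.
  have [yx yxi] : y != x /\ y != linv x by [].
  by rewrite crossingM crossingV (crossingX_other _ _ _ yx yxi) oppr0 addr0 crossingX.
have shifted0 :
    (\sum_(i < j) indicator (fun q => K (h * q)%g) (1 * fglet x ^+ i)%g)%R = 0%R.
  apply: big1 => i _; apply: indicator0; rewrite /= mul1g => Khi.
  apply: (minm (j - i)).
    by rewrite subn_gt0 ltn_ord (leq_ltn_trans (leq_subr _ _)).
  rewrite expg_subn; last exact/ltnW/ltn_ord.
  have -> : (fglet x ^+ i)^-1 * fglet x ^+ j = (h * fglet x ^+ i)^-1 * (h * fglet x ^+ j).
    by rewrite invgM -mulgA mulKg.
  exact: KM (KV _ Khi) Khj.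
have := h_shift x Kk; rewrite !count shifted0 sum_indicator_expg //.
by move=> i /andP[i0 ij]; rewrite mul1g; apply: minm; rewrite i0 (ltn_trans ij).
Qed.

End Displacement.

Theorem mainTheorem8 (n : nat) (hn : 2 <= n)
  (I : Type) (K : I -> FG n -> Prop)
  (hK : forall i, [/\ is_subgroup (K i), finite_index (K i)
                    & fully_characteristic (K i)])
  (hexh : forall w : FG n, w <> fg1 n -> exists i, ~ K i w)
  (phi : FG n -> FG n) (hphi : is_endo phi)
  (hneq : ~ (forall g, phi g = g)) :
  exists i, ~ induced_H1_is_id phi (K i).
Proof.
have [g phig] : exists g, phi g <> g by apply/existsNP.
have /hexh[i nKi] : fgmul (fginv g) (phi g) <> fg1 n.
  by rewrite fgmulE fginvE fg1E => /mulg1_eq; rewrite invgK => /esym.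
exists i => phi_H1; case: (hK i) => Ksub Kfin Kfc; apply: nKi.
have Kconj := fully_characteristic_conj_closed Kfc.
apply: (displacement_mem Ksub Kfin Kconj) hn => z k Kk.
exact: crossing_displacement.
Qed.
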